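(* Let $\lambda=(\lambda_1,\dots,\lambda_n)\in\mathbb Z^n$ with $\lambda_1>\lambda_2>\cdots>\lambda_n$ (all entries distinct and decreasing). Write the Schur $P$-Laurent polynomial as $P_\lambda=\sum_\mu g_{\mu\lambda}s_\mu$, the sum over generalized partitions $\mu$ of length $n$. Then $g_{0\lambda}=1$ if $\lambda=2\rho$, and $g_{0\lambda}=0$ otherwise, where $2\rho=(n-1,n-3,\dots,-(n-1))$, i.e. $(2\rho)_i=n-2i+1$.
   Context: A generalized partition of length $n$ is $\mu=(\mu_1\ge\cdots\ge\mu_n)\in\mathbb Z^n$; its Schur Laurent polynomial is $s_\mu=\sum_{w\in\mathfrak S_n}w\bigl(x_1^{\mu_1+n-1}x_2^{\mu_2+n-2}\cdots x_n^{\mu_n}\prod_{i<j}(x_i-x_j)^{-1}\bigr)$, where $\mathfrak S_n$ permutes the variables; these form a basis of the symmetric Laurent polynomials in $x_1,\dots,x_n$, and $s_0=1$. For $\lambda\in\mathbb Z^n$ with strictly decreasing entries, $P_\lambda=\sum_{w\in\mathfrak S_n}w\bigl(x_1^{\lambda_1}\cdots x_n^{\lambda_n}\prod_{i<j}\frac{x_i+x_j}{x_i-x_j}\bigr)$. *)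

(* Laurent polynomials in x_1..x_n are realised inside the
   field of rational functions {fraction {mpoly int[n]}}. *)
From HB Require Import structures.
From mathcomp Require Import all_boot all_order all_algebra all_fingroup.
From mathcomp Require Import mpoly.
Set Implicit Arguments. Unset Strict Implicit. Unset Printing Implicit Defensive.
Import Order.TTheory GRing.Theory Num.Theory.
Local Open Scope ring_scope.

Definition ratfun (n : nat) := {fraction {mpoly int[n]}}.

Definition xvar (n : nat) (i : 'I_n) : ratfun n := tofrac ('X_i : {mpoly int[n]}).

Definition wmono (n : nat) (w : 'S_n) (a : 'I_n -> int) : ratfun n :=
  \prod_(i < n) (xvar (w i)) ^ (a i).

Definition wvandermonde (n : nat) (w : 'S_n) : ratfun n :=
  \prod_(i < n) \prod_(j < n | (i < j)%N) (xvar (w i) - xvar (w j)).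

Definition wplusprod (n : nat) (w : 'S_n) : ratfun n :=
  \prod_(i < n) \prod_(j < n | (i < j)%N) (xvar (w i) + xvar (w j)).

Definition gen_partition (n : nat) (mu : {ffun 'I_n -> int}) : bool :=
  [forall i : 'I_n, forall j : 'I_n, (i <= j)%N ==> (mu j <= mu i)].

Definition strict_decr (n : nat) (la : {ffun 'I_n -> int}) : bool :=
  [forall i : 'I_n, forall j : 'I_n, (i < j)%N ==> (la j < la i)].

(* Schur Laurent polynomial
   s_mu = sum_w w( x_1^{mu_1+n-1} ... x_n^{mu_n} / prod_{i<j}(x_i - x_j) ),
   with 0-based index i: exponent of x_i is mu_i + n - 1 - i. *)
Definition schurL (n : nat) (mu : {ffun 'I_n -> int}) : ratfun n :=
  \sum_(w : 'S_n)
     wmono w (fun i => mu i + (n - 1 - i)%:Z) / wvandermonde w.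

Definition schurP (n : nat) (la : {ffun 'I_n -> int}) : ratfun n :=
  \sum_(w : 'S_n) wmono w (fun i => la i) * (wplusprod w / wvandermonde w).

(* 2 rho = (n-1, n-3, ..., -(n-1)); 0-based: (2rho)_i = n - 2 i - 1 *)
Definition two_rho (n : nat) : {ffun 'I_n -> int} :=
  [ffun i : 'I_n => n%:Z - 2 * (i : nat)%:Z - 1].

Definition zero_part (n : nat) : {ffun 'I_n -> int} := [ffun => 0].

(* Write a_u = sum_w sgn(w) w(x^u) for the alternant of an exponent vector u
   and d = (0, 1, ..., n-1).  Up to the sign eps = (-1)^(n(n-1)/2),
     P_la = eps a_la a_2d / a_d^2   and   s_mu = eps a_(mu + d') / a_d
   with d' = (n-1, ..., 0), so the expansion of P_la is the identity
   a_la a_2d = a_d sum_mu g_mu a_(mu + d') between Laurent polynomials.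
   Multiplying it by a_(-d) and using, pair by pair,
   (x^2 - y^2)(x^-1 - y^-1) = (x - y)(x^-2 - y^-2) x y, one can cancel a_d:
     a_(la + n - 1) a_(-2d) = sum_mu g_mu a_(mu + d') a_(-d).
   For strictly decreasing u and v, the constant term of a_u a_v is
   sgn(w0) n! when u_i + v_(n+1-i) = 0 for all i and 0 otherwise, because the
   only permutation matching a decreasing sequence with the negative of a
   decreasing sequence is the reversal w0.  Comparing constant terms gives
   [la = 2 rho] = g_0. *)

Set Warnings "-notation-overridden,-ambiguous-paths,-notation-incompatible-prefix".
From HB Require Import structures.
From mathcomp Require Import all_boot all_order all_algebra all_fingroup.
From mathcomp Require Import mpoly.
From mathcomp Require Import ring zify.
Import Order.TTheory GRing.Theory Num.Theory.
Local Open Scope ring_scope.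
Set Implicit Arguments. Unset Strict Implicit. Unset Printing Implicit Defensive.

Section LaurentMonomials.

Variable n : nat.
Implicit Types (a b e : 'I_n -> int) (s w : 'S_n).

Lemma xvar_neq0 (i : 'I_n) : xvar i != 0.
Proof.
rewrite tofrac_eq0; apply/eqP => X0.
by have := mcoeffXU int i i; rewrite X0 mcoeff0 eqxx => /esym/eqP; rewrite oner_eq0.
Qed.

Lemma xvarB_neq0 (i j : 'I_n) : i != j -> xvar i - xvar j != 0.
Proof.
move=> neq_ij; rewrite /xvar -tofracB tofrac_eq0 subr_eq0; apply/eqP => Xij.
have := mcoeffXU int i i; rewrite Xij mcoeffXU eqxx eq_sym (negbTE neq_ij).
by move/esym/eqP; rewrite oner_eq0.
Qed.

Definition mono e : ratfun n := \prod_(k < n) xvar k ^ e k.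

Definition wexp w e : {ffun 'I_n -> int} := [ffun k => e (w^-1 k)]%g.

Lemma monoD a b : mono (fun k => a k + b k) = mono a * mono b.
Proof.
by rewrite -big_split; apply: eq_bigr => k _; rewrite expfzDr ?xvar_neq0.
Qed.

Lemma wmono_mono w e : wmono w e = mono (wexp w e).
Proof.
rewrite /mono (reindex_inj (@perm_inj _ w)).
by apply: eq_bigr => i _; rewrite ffunE permK.
Qed.

Lemma wmonoD w a b : wmono w (fun i => a i + b i) = wmono w a * wmono w b.
Proof.
by rewrite !wmono_mono -monoD; apply: eq_bigr => k _; rewrite !ffunE.
Qed.

Lemma wmono_const w (c : int) : wmono w (fun _ => c) = mono (fun _ => c).
Proof. by rewrite wmono_mono; apply: eq_bigr => k _; rewrite ffunE. Qed.

Lemma wmonoM s w e : wmono (s * w)%g e = wmono w (fun i => e (s^-1 i)%g).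
Proof.
rewrite [RHS](reindex_inj (@perm_inj _ s)).
by apply: eq_bigr => i _; rewrite permK permM.
Qed.

Lemma wexp_eq0 w e : (wexp w e == 0) = [forall i, e i == 0].
Proof.
apply/eqP/forallP => [/ffunP e0 i | e0]; last by apply/ffunP => k; rewrite !ffunE; apply/eqP.
by have := e0 (w i); rewrite !ffunE permK => ->.
Qed.

End LaurentMonomials.

Section LaurentCoefficients.

Variable n : nat.
Implicit Types (e t : {ffun 'I_n -> int}) (K : nat).

Definition exp_bound (e : 'I_n -> int) : nat := \max_(k < n) absz (e k).

(* Multiplying by (x_1 ... x_n)^K, for K bounding all exponents involved, turns
   Laurent monomials into monomials of the polynomial ring {mpoly int[n]}. *)
Definition shift_mnom K (e : 'I_n -> int) : 'X_{1.. n} :=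
  [multinom absz (e k + K%:Z)%R | k < n].

Lemma exp_bound_shift_ge0 K (e : 'I_n -> int) k :
  (exp_bound e <= K)%N -> 0 <= e k + K%:Z.
Proof. by move=> /(leq_trans (leq_bigmax k)); lia. Qed.

Lemma mono_shift K (e : 'I_n -> int) : (exp_bound e <= K)%N ->
  mono e * mono (fun _ => K%:Z) = tofrac 'X_[shift_mnom K e].
Proof.
move=> le_eK; rewrite -monoD mpolyXE_id rmorph_prod; apply: eq_bigr => k _.
by rewrite mnmE rmorphXn exprnP gez0_abs ?exp_bound_shift_ge0.
Qed.

Lemma shift_mnom_eq K e t : (exp_bound e <= K)%N -> (exp_bound t <= K)%N ->
  (shift_mnom K e == shift_mnom K t) = (e == t).
Proof.
move=> le_eK le_tK; apply/eqP/eqP => [/mnmP eq_et | -> //]; apply/ffunP => k.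
have := eq_et k; rewrite !mnmE => /(congr1 Posz); rewrite !gez0_abs;
  by [move/addIr | apply: exp_bound_shift_ge0].
Qed.

Lemma sum_mono_shift (I : eqType) (r : seq I) (c : I -> int) (e : I -> {ffun 'I_n -> int})
    K : {in r, forall i, exp_bound (e i) <= K}%N ->
  (\sum_(i <- r) (c i)%:~R * mono (e i)) * mono (fun _ => K%:Z) =
  tofrac (\sum_(i <- r) (c i)%:~R * 'X_[shift_mnom K (e i)]).
Proof.
move=> le_rK; rewrite mulr_suml rmorph_sum !big_seq; apply: eq_bigr => i ri.
by rewrite -mulrA mono_shift ?le_rK // rmorphM rmorph_int.
Qed.

Lemma mcoeff_sum_shift (I : eqType) (r : seq I) (c : I -> int)
    (e : I -> {ffun 'I_n -> int}) K t :
  {in r, forall i, exp_bound (e i) <= K}%N -> (exp_bound t <= K)%N ->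
  (\sum_(i <- r) (c i)%:~R * 'X_[shift_mnom K (e i)])@_(shift_mnom K t) =
  \sum_(i <- r | e i == t) c i.
Proof.
move=> le_rK le_tK; rewrite raddf_sum [RHS]big_mkcond !big_seq; apply: eq_bigr => i ri.
rewrite mulrzl raddfMz /= mcoeffX shift_mnom_eq ?le_rK //.
by case: (e i == t); [exact: intz | exact: mul0rz].
Qed.

Lemma mono_coef_eq (I J : eqType) (r : seq I) (s : seq J) (c : I -> int) (d : J -> int)
    (e : I -> {ffun 'I_n -> int}) (f : J -> {ffun 'I_n -> int}) t :
  \sum_(i <- r) (c i)%:~R * mono (e i) = \sum_(j <- s) (d j)%:~R * mono (f j) ->
  \sum_(i <- r | e i == t) c i = \sum_(j <- s | f j == t) d j.
Proof.
pose K := (exp_bound t + \max_(i <- r) exp_bound (e i) + \max_(j <- s) exp_bound (f j))%N.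
have le_tK : (exp_bound t <= K)%N by rewrite /K; lia.
have le_rK : {in r, forall i, exp_bound (e i) <= K}%N.
  move=> i ri; have := @leq_bigmax_seq _ r (fun=> true) (fun i => exp_bound (e i)) i ri.
  by rewrite /K /=; lia.
have le_sK : {in s, forall j, exp_bound (f j) <= K}%N.
  move=> j sj; have := @leq_bigmax_seq _ s (fun=> true) (fun j => exp_bound (f j)) j sj.
  by rewrite /K /=; lia.
move/(congr1 ( *%R^~ (mono (fun _ => K%:Z)))); rewrite !sum_mono_shift //.
move/eqP; rewrite tofrac_eq => /eqP/(congr1 (mcoeff (shift_mnom K t))).
by rewrite !mcoeff_sum_shift.
Qed.

End LaurentCoefficients.

Section Alternants.

Variable n : nat.
Implicit Types (a b e : 'I_n -> int) (s w : 'S_n).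

Definition alt e : ratfun n := \sum_(s : 'S_n) (-1) ^+ s * wmono s e.

Lemma alt_mul_mono_const a (c : int) :
  alt a * mono (fun _ => c) = alt (fun i => a i + c).
Proof.
by rewrite mulr_suml; apply: eq_bigr => s _; rewrite wmonoD wmono_const mulrA.
Qed.

Lemma alt_mul a b : alt a * alt b =
  \sum_(p : 'S_n * 'S_n)
     ((-1) ^+ p.1 : int)%:~R * mono (wexp p.2 (fun i => a i + b (p.1 i))).
Proof.
under eq_bigr do rewrite rmorph_sign -wmono_mono.
rewrite -(pair_bigA _ (fun s w => (-1) ^+ s * wmono w (fun i => a i + b (s i)))).
rewrite exchange_big mulr_suml; apply: eq_bigr => w _.
rewrite mulr_sumr (reindex_inj (inj_comp (@mulIg _ w) (@invg_inj _))) /=.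
apply: eq_bigr => s _; rewrite wmonoM invgK wmonoD odd_permM odd_permV.
by rewrite mulrACA -signr_addb addbCA addbb addbF.
Qed.

End Alternants.

Section RevPerm.

Variable n : nat.

Definition rev_perm : 'S_n := perm (@rev_ord_inj n).

Lemma ord_decr_ge (f : 'I_n -> 'I_n) :
  {homo f : i j / (i < j)%N >-> (j < i)%N} -> forall i : 'I_n, (n - i.+1 <= f i)%N.
Proof.
move=> f_decr i; suff: forall k (i : 'I_n), (n - i.+1 = k -> k <= f i)%N by exact.
elim=> [//|k IHk] {}i i_k; have lt_i1n : (i.+1 < n)%N by lia.
have le_k_f_i1 : (k <= f (Ordinal lt_i1n))%N by apply: IHk => /=; lia.
by have := f_decr i (Ordinal lt_i1n) (ltnSn i); lia.
Qed.

Lemma ord_decr_rev (f : 'I_n -> 'I_n) :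
  {homo f : i j / (i < j)%N >-> (j < i)%N} -> f =1 @rev_ord n.
Proof.
move=> f_decr i; apply: val_inj => /=.
have rev_f_rev_decr : {homo @rev_ord n \o f \o @rev_ord n : i j / (i < j)%N >-> (j < i)%N}.
  move=> j k lt_jk /=; have := ltn_ord k; have := ltn_ord (f (rev_ord k)).
  have: (rev_ord k < rev_ord j)%N by rewrite /=; have := ltn_ord k; lia.
  by move/f_decr; lia.
have := ord_decr_ge rev_f_rev_decr (rev_ord i); have := ord_decr_ge f_decr i.
by rewrite /= rev_ordK /=; have := ltn_ord (f i); lia.
Qed.

Lemma rev_perm_of_sum_eq0 (a b : 'I_n -> int) (s : 'S_n) :
  {homo a : i j / (i < j)%N >-> j < i} -> {homo b : i j / (i < j)%N >-> j < i} ->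
  (forall i, a i + b (s i) = 0) -> s = rev_perm.
Proof.
move=> a_decr b_decr ab0; apply/permP => i; rewrite permE.
apply: ord_decr_rev => {}i j lt_ij; rewrite ltnNge leq_eqVlt.
have := a_decr i j lt_ij; have := ab0 i; have := ab0 j.
case: ltngtP => // [lt_s | /val_inj ->]; last lia.
by have := b_decr _ _ lt_s; lia.
Qed.

End RevPerm.

Section ConstantTerm.

Variable n : nat.
Implicit Types (a b : 'I_n -> int).

Lemma alt_mul_coef0 a b :
  {homo a : i j / (i < j)%N >-> j < i} -> {homo b : i j / (i < j)%N >-> j < i} ->
  \sum_(p : 'S_n * 'S_n | wexp p.2 (fun i => a i + b (p.1 i)) == 0)
     ((-1) ^+ p.1 : int) =
  if [forall i, a i + b (rev_ord i) == 0] then (-1) ^+ rev_perm n *+ n`! else 0.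
Proof.
move=> a_decr b_decr.
rewrite (eq_bigl (fun p : 'S_n * 'S_n =>
    [forall i, a i + b (p.1 i) == 0] && predT p.2)); last first.
  by move=> p; rewrite wexp_eq0 andbT.
rewrite -(pair_big (fun s : 'S_n => [forall i, a i + b (s i) == 0]) predT
  (fun s _ => ((-1) ^+ s : int))) /=.
under eq_bigr do rewrite sumr_const card_Sn.
rewrite (eq_bigl (fun s => (s == rev_perm n) && [forall i, a i + b (rev_ord i) == 0])).
  by case: ifP => _; [rewrite (big_pred1 (rev_perm n)) | rewrite big_pred0] => // s;
    rewrite ?andbT ?andbF.
move=> s; apply/forallP/andP => [ab0 | [/eqP-> /forallP ab0] i]; last by rewrite permE.
have s_rev := rev_perm_of_sum_eq0 a_decr b_decr (fun i => eqP (ab0 i)).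
by split; [apply/eqP | apply/forallP => i; have := ab0 i; rewrite s_rev permE].
Qed.

Lemma alt_mul_coef0_eq (T : eqType) (S : seq T) (g : T -> int) (a : T -> 'I_n -> int)
    (b a0 b0 : 'I_n -> int) :
  {homo a0 : i j / (i < j)%N >-> j < i} -> {homo b0 : i j / (i < j)%N >-> j < i} ->
  (forall mu, mu \in S -> {homo a mu : i j / (i < j)%N >-> j < i}) ->
  {homo b : i j / (i < j)%N >-> j < i} ->
  alt a0 * alt b0 = \sum_(mu <- S) (g mu)%:~R * (alt (a mu) * alt b) ->
  [forall i, a0 i + b0 (rev_ord i) == 0]%:R =
  \sum_(mu <- S) g mu * [forall i, a mu i + b (rev_ord i) == 0]%:R :> int.
Proof.
move=> a0_decr b0_decr a_decr b_decr.
pose c : int := (-1) ^+ rev_perm n *+ n`!.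
have c_neq0 : c != 0 by rewrite mulrn_eq0 signr_eq0 orbF gtn_eqF ?fact_gt0.
rewrite alt_mul; under [RHS]eq_bigr => mu _.
  by rewrite alt_mul mulr_sumr; under eq_bigr do rewrite mulrA -intrM; over.
rewrite -(big_allpairs (F := fun q : T * ('S_n * 'S_n) =>
   (g q.1 * (-1) ^+ q.2.1)%:~R * mono (wexp q.2.2 (fun i => a q.1 i + b (q.2.1 i))))).
move/(mono_coef_eq 0); rewrite alt_mul_coef0 // big_mkcond big_allpairs big_seq.
rewrite (eq_bigr (fun mu => g mu * [forall i, a mu i + b (rev_ord i) == 0]%:R * c)).
  rewrite -/c -mulr_suml -big_seq -mulrb => coef0.
  by apply: (mulIf c_neq0); rewrite mulr_natl.
move=> mu /a_decr mu_decr; rewrite -big_mkcond /= -mulr_sumr alt_mul_coef0 // -/c.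
by rewrite -mulrA mulr_natl mulrb.
Qed.

End ConstantTerm.

Lemma vandermonde_expand (R : comPzRingType) n (a : 'I_n -> R) :
  \prod_(i < n) \prod_(j < n | (i < j)%N) (a j - a i) =
  \sum_(s : 'S_n) (-1) ^+ s * \prod_(i < n) a (s i) ^+ i.
Proof.
transitivity (\det (Vandermonde n (\row_j a j))).
  by rewrite det_Vandermonde; do 2!apply: eq_bigr => ? _; rewrite !mxE.
by apply: eq_bigr => s _; congr (_ * _); apply: eq_bigr => i _; rewrite !mxE.
Qed.

Lemma subr_expz2_mulN1 (F : fieldType) (x y : F) : x != 0 -> y != 0 ->
  (x ^ 2 - y ^ 2) * (x ^ (-1) - y ^ (-1)) =
  (x ^ 1 - y ^ 1) * (x ^ (-2) - y ^ (-2)) * (x * y).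
Proof.
move=> x0 y0; rewrite -!invr_expz !expr1z -!exprnP.
by field; rewrite x0 y0.
Qed.

Lemma card_ord_gt_lt n (k : 'I_n) :
  (#|[pred j : 'I_n | (k < j)%N]| + #|[pred j : 'I_n | (j < k)%N]|)%N = n.-1.
Proof.
rewrite -cardUI (@eq_card0 _ [predI _ & _]) => [|j]; last first.
  by rewrite !inE /=; apply/negbTE; case: ltngtP.
have -> : n.-1 = #|predC1 k| by rewrite cardC1 card_ord.
rewrite addn0; apply: eq_card => j.
by rewrite !inE /= -(inj_eq val_inj) neq_ltn orbC.
Qed.

Section Vandermonde.

Variable n : nat.
Implicit Types (w : 'S_n) (z : int).

Definition staircase z : 'I_n -> int := fun i => z * i%:Z.

Definition pairs_sign : ratfun n := \prod_(i < n) \prod_(j < n | (i < j)%N) (-1).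

Lemma pairs_sign_sqr : pairs_sign ^+ 2 = 1.
Proof.
rewrite -prodrXl big1 // => i _; rewrite -prodrXl big1 // => j _.
by rewrite sqrrN expr1n.
Qed.

Lemma prod_pairs_expz w z :
  \prod_(i < n) \prod_(j < n | (i < j)%N) (xvar (w i) ^ z - xvar (w j) ^ z) =
  pairs_sign * ((-1) ^+ w * alt (staircase z)).
Proof.
transitivity (pairs_sign *
    \prod_(i < n) \prod_(j < n | (i < j)%N) (xvar (w j) ^ z - xvar (w i) ^ z)).
  rewrite -big_split; apply: eq_bigr => i _; rewrite -big_split.
  by apply: eq_bigr => j _; rewrite /= mulN1r opprB.
rewrite (vandermonde_expand (fun k => xvar (w k) ^ z)) /alt; congr (_ * _).
rewrite mulr_sumr [RHS](reindex_inj (@mulIg _ w)); apply: eq_bigr => s _ /=.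
rewrite odd_permM addbC signr_addb !mulrA -expr2 sqrr_sign mul1r.
by congr (_ * _); apply: eq_bigr => i _; rewrite permM exprnP exprz_exp.
Qed.

Lemma wvandermondeE w : wvandermonde w = pairs_sign * ((-1) ^+ w * alt (staircase 1)).
Proof.
by rewrite -prod_pairs_expz; do 2!apply: eq_bigr => ? _; rewrite !expr1z.
Qed.

Lemma wplusprod_wvandermonde w :
  wplusprod w * wvandermonde w = pairs_sign * ((-1) ^+ w * alt (staircase 2)).
Proof.
rewrite -prod_pairs_expz -big_split; apply: eq_bigr => i _.
by rewrite -big_split; apply: eq_bigr => j _; rewrite /= -!exprnP subr_sqr mulrC.
Qed.

Lemma alt_staircase z :
  alt (staircase z) =
  pairs_sign * \prod_(i < n) \prod_(j < n | (i < j)%N) (xvar i ^ z - xvar j ^ z).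
Proof.
transitivity (pairs_sign * (pairs_sign * ((-1) ^+ (1 : 'S_n)%g * alt (staircase z)))).
  by rewrite odd_perm1 mul1r mulrA -expr2 pairs_sign_sqr mul1r.
by rewrite -prod_pairs_expz; congr (_ * _); do 2!apply: eq_bigr => ? _; rewrite !perm1.
Qed.

Lemma prod_pairs_xvar_mul :
  \prod_(i < n) \prod_(j < n | (i < j)%N) (xvar i * xvar j) = mono (fun _ => (n.-1)%:Z).
Proof.
under eq_bigr do rewrite big_split /=.
rewrite big_split /= [X in _ * X](exchange_big_dep xpredT) //= -big_split /=.
by apply: eq_bigr => k _; rewrite !prodr_const -exprD card_ord_gt_lt.
Qed.

Lemma alt_staircase2_mulN1 :
  alt (staircase 2) * alt (staircase (-1)) =
  alt (staircase 1) * alt (staircase (-2)) * mono (fun _ : 'I_n => (n.-1)%:Z).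
Proof.
have cancel_sign (x y : ratfun n) : pairs_sign * x * (pairs_sign * y) = x * y.
  by rewrite mulrACA -expr2 pairs_sign_sqr mul1r.
rewrite !alt_staircase !cancel_sign -prod_pairs_xvar_mul -!big_split.
apply: eq_bigr => i _; rewrite -!big_split; apply: eq_bigr => j _ /=.
by rewrite subr_expz2_mulN1 ?xvar_neq0.
Qed.

End Vandermonde.

Section SchurAlternants.

Variable n : nat.

Lemma pairs_sign_neq0 : pairs_sign n != 0.
Proof. by apply/prodf_neq0 => i _; apply/prodf_neq0 => j _; rewrite oppr_eq0 oner_eq0. Qed.

Lemma pairs_signV : (pairs_sign n)^-1 = pairs_sign n.
Proof. by apply: mulr1_eq; rewrite -expr2 pairs_sign_sqr. Qed.

Lemma wvandermonde_neq0 (w : 'S_n) : wvandermonde w != 0.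
Proof.
apply/prodf_neq0 => i _; apply/prodf_neq0 => j lt_ij.
by rewrite xvarB_neq0 // (inj_eq perm_inj) -(inj_eq val_inj) ltn_eqF.
Qed.

Lemma alt_staircase1_neq0 : alt (@staircase n 1) != 0.
Proof.
have := wvandermonde_neq0 1; rewrite wvandermondeE odd_perm1 mul1r.
by apply: contraNneq => ->; rewrite mulr0.
Qed.

Lemma schurL_alt (mu : {ffun 'I_n -> int}) :
  schurL mu = pairs_sign n * alt (fun i => mu i + (n - 1 - i)%:Z) / alt (@staircase n 1).
Proof.
rewrite /schurL [alt (fun i => _ + _)]/alt mulr_sumr mulr_suml; apply: eq_bigr => w _.
rewrite wvandermondeE invfM invr_signM pairs_signV -!mulrA mulrCA.
by congr (_ * _); rewrite mulrCA.
Qed.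

Lemma schurP_alt (la : {ffun 'I_n -> int}) :
  schurP la =
  pairs_sign n * (alt la * alt (@staircase n 2)) / alt (@staircase n 1) ^+ 2.
Proof.
rewrite /schurP [alt la]/alt mulr_suml mulr_sumr mulr_suml; apply: eq_bigr => w _.
have -> : wplusprod w / wvandermonde w =
          wplusprod w * wvandermonde w / wvandermonde w ^+ 2.
  by rewrite expr2 invfM mulrA mulfK ?wvandermonde_neq0.
rewrite wplusprod_wvandermonde wvandermondeE !exprMn pairs_sign_sqr sqrr_sign !mul1r.
rewrite mulrA; congr (_ * _); rewrite mulrCA -mulrA; congr (_ * _); exact: mulrCA.
Qed.

Lemma alt_identity_of_schur_expansion (la : {ffun 'I_n -> int})
    (S : seq {ffun 'I_n -> int}) (g : {ffun 'I_n -> int} -> int) :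
  schurP la = \sum_(mu <- S) (g mu)%:~R * schurL mu ->
  alt (fun i => la i + (n.-1)%:Z) * alt (@staircase n (-2)) =
  \sum_(mu <- S)
     (g mu)%:~R * (alt (fun i => mu i + (n - 1 - i)%:Z) * alt (@staircase n (-1))).
Proof.
move=> hP; set D := alt (@staircase n 1); have D_neq0 : D != 0 := alt_staircase1_neq0.
set B := \sum_(mu <- S) (g mu)%:~R * alt (fun i => mu i + (n - 1 - i)%:Z).
have laB : alt la * alt (@staircase n 2) = D * B.
  have : pairs_sign n * (alt la * alt (@staircase n 2)) / D ^+ 2 = pairs_sign n * B / D.
    rewrite -schurP_alt hP /B mulr_sumr mulr_suml; apply: eq_bigr => mu _.
    by rewrite schurL_alt mulrA mulrCA.
  rewrite -!mulrA => /(mulfI pairs_sign_neq0)/(congr1 ( *%R^~ (D ^+ 2))).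
  rewrite -mulrA mulfVK ?expf_neq0 // => ->.
  by rewrite expr2 mulrA mulfVK // mulrC.
apply: (mulfI D_neq0).
transitivity (alt la * (D * alt (@staircase n (-2)) * mono (fun _ => (n.-1)%:Z))).
  by rewrite -alt_mul_mono_const mulrCA -!mulrA [mono _ * _]mulrC -mulrA.
rewrite -alt_staircase2_mulN1 mulrA laB -mulrA /B [_ * alt _]mulr_suml.
by under eq_bigr do rewrite -mulrA.
Qed.

End SchurAlternants.

Lemma sum_seq_delta (T : eqType) (s : seq T) (F : T -> int) x :
  uniq s -> (x \notin s -> F x = 0) -> \sum_(y <- s) F y * (y == x)%:R = F x.
Proof.
move=> s_uniq F_out; have [x_s | x_notin_s] := boolP (x \in s).
  rewrite (bigD1_seq x) //= eqxx mulr1 big1 ?addr0 // => y /negbTE ->.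
  by rewrite mulr0.
rewrite F_out // big1_seq // => y /andP[_ y_s].
suff /negbTE -> : y != x by rewrite mulr0.
by apply: contraNneq x_notin_s => <-.
Qed.

Section DecreasingExponents.

Variable n : nat.

Lemma staircase_decr (z : int) : z < 0 -> {homo @staircase n z : i j / (i < j)%N >-> j < i}.
Proof. by move=> z_lt0 i j lt_ij; rewrite /staircase ltr_nM2l // ltz_nat. Qed.

Lemma strict_decr_homo (la : {ffun 'I_n -> int}) :
  strict_decr la -> {homo la : i j / (i < j)%N >-> j < i}.
Proof. by move=> /forallP la_decr i j; have /forallP/(_ j)/implyP := la_decr i. Qed.

Lemma gen_partition_shift_decr (mu : {ffun 'I_n -> int}) : gen_partition mu ->
  {homo (fun i : 'I_n => mu i + (n - 1 - i)%:Z) : i j / (i < j)%N >-> j < i}.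
Proof.
move=> /forallP mu_part i j lt_ij; have /forallP/(_ j)/implyP/(_ (ltnW lt_ij)) := mu_part i.
by have := ltn_ord j; lia.
Qed.

Lemma eq_two_rho_staircase (la : {ffun 'I_n -> int}) :
  [forall i, la i + (n.-1)%:Z + staircase (-2) (rev_ord i) == 0] = (la == two_rho n).
Proof.
apply/forallP/eqP => [la_rho | -> i]; last first.
  by apply/eqP; rewrite ffunE /staircase /=; have := ltn_ord i; lia.
apply/ffunP => i; have := eqP (la_rho i); rewrite ffunE /staircase /=.
by have := ltn_ord i; lia.
Qed.

Lemma eq_zero_part_staircase (mu : {ffun 'I_n -> int}) :
  [forall i, mu i + (n - 1 - i)%:Z + staircase (-1) (rev_ord i) == 0] = (mu == zero_part n).
Proof.
apply/forallP/eqP => [mu0 | -> i]; last first.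
  by apply/eqP; rewrite ffunE /staircase /=; have := ltn_ord i; lia.
apply/ffunP => i; have := eqP (mu0 i); rewrite !ffunE /staircase /=.
by have := ltn_ord i; lia.
Qed.

End DecreasingExponents.

Unset Implicit Arguments.

Theorem lemma3p6 (n : nat) (la : {ffun 'I_n -> int}) :
  strict_decr la ->
  forall (S : seq {ffun 'I_n -> int}) (g : {ffun 'I_n -> int} -> int),
    uniq S ->
    (forall mu, mu \in S -> gen_partition mu) ->
    (forall mu, mu \notin S -> g mu = 0) ->
    schurP la = \sum_(mu <- S) (g mu)%:~R * schurL mu ->
    g (zero_part n) = (if la == two_rho n then 1 else 0).
Proof.
move=> /strict_decr_homo la_decr S g S_uniq S_part g_out hP.
have shifted_la_decr : {homo (fun i => la i + (n.-1)%:Z) : i j / (i < j)%N >-> j < i}.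
  by move=> i j /la_decr; rewrite ltrD2r.
have := alt_mul_coef0_eq shifted_la_decr (@staircase_decr n (-2) isT)
  (fun mu S_mu => gen_partition_shift_decr (S_part mu S_mu)) (@staircase_decr n (-1) isT)
  (alt_identity_of_schur_expansion hP).
rewrite eq_two_rho_staircase; under eq_bigr do rewrite eq_zero_part_staircase.
rewrite sum_seq_delta //; last exact: g_out.
by move=> <-; case: (la == two_rho n).
Qed.
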